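(* The equational theory of $\mathbf{W}$ is decidable if, and only if, there exists an algorithm that decides, for any basic terms $t_1,\dots,t_n$, whether $\mathbf{W}\models 1\le t_1\vee\cdots\vee t_n$.
   Context: Let $\omega^+=\omega\cup\{\omega\}$. A time warp is a join-preserving map $\omega^+\to\omega^+$; $W$ is the set of time warps ordered pointwise; $p(m)=\bigvee\{k\in\omega\mid k<m\}$; $f\backslash g$ is the largest time warp $h$ with $f\circ h\le g$. $\mathbf{W}=\langle W,\wedge,\vee,\circ,{}^\star,\mathrm{id}\rangle$ with pointwise meet/join, composition, $f^\star:=f\backslash p$, identity. Terms are built from a countably infinite set of variables using $\wedge,\vee,\cdot,{}',1$, interpreted as $\wedge,\vee,\circ,{}^\star,\mathrm{id}$. A basic term is one built from variables using only $\cdot$, ${}'$, $1$. $\mathbf{W}\models s\le t$ means the value of $s$ is pointwise below that of $t$ under every assignment of time warps to the variables. *)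

From Stdlib Require Import List Arith PeanoNat ClassicalEpsilon.
Import ListNotations.

Inductive om : Type := Fin (n : nat) | Om.

Definition ole (x y : om) : Prop :=
  match x, y with
  | _, Om => True
  | Om, Fin _ => False
  | Fin a, Fin b => a <= b
  end.

Definition olt (x y : om) : Prop := ole x y /\ x <> y.

Definition is_lub (S : om -> Prop) (x : om) : Prop :=
  (forall y, S y -> ole y x) /\
  (forall z, (forall y, S y -> ole y z) -> ole x z).

(* the join of an arbitrary subset (always exists since omega^+ is complete) *)
Definition omsup (S : om -> Prop) : om :=
  epsilon (inhabits Om) (fun x => is_lub S x).

Definition omeet (x y : om) : om :=
  match x, y with
  | Om, y => y
  | x, Om => x
  | Fin a, Fin b => Fin (Nat.min a b)
  end.

Definition ojoin (x y : om) : om :=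
  match x, y with
  | Om, _ => Om
  | _, Om => Om
  | Fin a, Fin b => Fin (Nat.max a b)
  end.

Definition time_warp (f : om -> om) : Prop :=
  forall (S : om -> Prop) (x : om),
    is_lub S x -> is_lub (fun y => exists z, S z /\ y = f z) (f x).

Definition pmap (m : om) : om :=
  omsup (fun y => exists k, y = Fin k /\ olt (Fin k) m).

(* f \ g = the largest time warp h with f o h <= g, realised as the pointwise
   join of all such h (which is that largest time warp). *)
Definition resid (f g : om -> om) (x : om) : om :=
  omsup (fun y => exists h, time_warp h /\
                       (forall z, ole (f (h z)) (g z)) /\ y = h x).

Definition wstar (f : om -> om) : om -> om := resid f pmap.

Inductive term : Type :=
| TVar  (i : nat)
| TMeet (s t : term)
| TJoin (s t : term)
| TMul  (s t : term)
| TStar (s : term)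
| TOne.

Fixpoint teval (sigma : nat -> om -> om) (t : term) : om -> om :=
  match t with
  | TVar i => sigma i
  | TMeet s u => fun x => omeet (teval sigma s x) (teval sigma u x)
  | TJoin s u => fun x => ojoin (teval sigma s x) (teval sigma u x)
  | TMul s u => fun x => teval sigma s (teval sigma u x)
  | TStar s => wstar (teval sigma s)
  | TOne => fun x => x
  end.

Fixpoint is_basic (t : term) : Prop :=
  match t with
  | TVar _ => True
  | TMul s u => is_basic s /\ is_basic u
  | TStar s => is_basic s
  | TOne => True
  | TMeet _ _ => False
  | TJoin _ _ => False
  end.

Definition W_models_le (s t : term) : Prop :=
  forall sigma : nat -> om -> om, (forall i, time_warp (sigma i)) ->
    forall x, ole (teval sigma s x) (teval sigma t x).

Definition W_models_eq (s t : term) : Prop :=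
  forall sigma : nat -> om -> om, (forall i, time_warp (sigma i)) ->
    forall x, teval sigma s x = teval sigma t x.

Fixpoint bigjoin (t1 : term) (ts : list term) : term :=
  match ts with
  | [] => t1
  | t2 :: ts' => TJoin t1 (bigjoin t2 ts')
  end.

Inductive recf : Type :=
| RZero
| RSucc
| RProj (i : nat)
| RComp (f : recf) (gs : list recf)
| RPrec (f g : recf)
| RMu (f : recf).

Inductive reval : recf -> list nat -> nat -> Prop :=
| ev_zero v : reval RZero v 0
| ev_succ x v : reval RSucc (x :: v) (S x)
| ev_proj i v : reval (RProj i) v (nth i v 0)
| ev_comp f gs v ys y :
    revals gs v ys -> reval f ys y -> reval (RComp f gs) v y
| ev_prec0 f g v y : reval f v y -> reval (RPrec f g) (0 :: v) y
| ev_precS f g n v z y :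
    reval (RPrec f g) (n :: v) z -> reval g (n :: z :: v) y ->
    reval (RPrec f g) (S n :: v) y
| ev_mu f v n :
    reval f (n :: v) 0 ->
    (forall m, m < n -> exists k, reval f (m :: v) (S k)) ->
    reval (RMu f) v n
with revals : list recf -> list nat -> list nat -> Prop :=
| evs_nil v : revals [] v []
| evs_cons g gs v y ys :
    reval g v y -> revals gs v ys -> revals (g :: gs) v (y :: ys).

Definition comp_decidable {T : Type} (enc : T -> nat) (D P : T -> Prop) : Prop :=
  exists c : recf, forall x, D x ->
    (P x -> reval c [enc x] 1) /\ (~ P x -> reval c [enc x] 0).

Definition cpair (a b : nat) : nat := (a + b) * (a + b + 1) / 2 + b.

Fixpoint enc_term (t : term) : nat :=
  match t with
  | TVar i => cpair 0 i
  | TMeet s u => cpair 1 (cpair (enc_term s) (enc_term u))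
  | TJoin s u => cpair 2 (cpair (enc_term s) (enc_term u))
  | TMul s u => cpair 3 (cpair (enc_term s) (enc_term u))
  | TStar s => cpair 4 (enc_term s)
  | TOne => cpair 5 0
  end.

Fixpoint enc_list (l : list term) : nat :=
  match l with
  | [] => 0
  | t :: l' => S (cpair (enc_term t) (enc_list l'))
  end.

Definition enc_eqn (e : term * term) : nat := cpair (enc_term (fst e)) (enc_term (snd e)).

Definition enc_nelist (l : term * list term) : nat := cpair (enc_term (fst l)) (enc_list (snd l)).

From Stdlib Require Import List Lia PeanoNat Classical ClassicalEpsilon.
Import ListNotations.

(* On time warps, [f |-> f^* = f\p] is an antitone involution exchanging
   pointwise joins and meets, and [f <= g] iff [g^* f <= p] iff [1 <= (g^* f)^*].
   Hence [s = t] holds in W iff [1 <= (t^* s)^* /\ (s^* t)^*].  Since omega^+ is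
   a chain, time warps preserve nonempty finite meets and joins; with
   distributivity and the De Morgan laws for [^*] this effectively rewrites every
   term as a meet of joins of basic terms, and [1] lies below such a meet iff it
   lies below each of its joins.  Conversely [1 <= t] iff [1 /\ t = 1].  Both
   translations are primitive recursive on Goedel codes. *)

(** * The chain omega^+ *)

Ltac om_cases :=
  intros; repeat match goal with a : om |- _ => destruct a end;
  simpl in *; intros; try contradiction; auto; try (f_equal; lia).

Lemma ole_refl x : ole x x. Proof. om_cases. Qed.
Lemma ole_trans x y z : ole x y -> ole y z -> ole x z. Proof. om_cases; lia. Qed.
Lemma ole_antisym x y : ole x y -> ole y x -> x = y. Proof. om_cases. Qed.
Lemma ole_total x y : ole x y \/ ole y x. Proof. om_cases; lia. Qed.
Lemma ole_bot x : ole (Fin 0) x. Proof. om_cases; lia. Qed.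
Lemma ole_top x : ole x Om. Proof. om_cases. Qed.

Lemma ole_Fin_iff a m : ole a (Fin m) <-> ~ ole (Fin (S m)) a.
Proof. om_cases; split; intros; try lia; tauto. Qed.
Lemma not_ole_Fin a m : ~ ole a (Fin m) <-> ole (Fin (S m)) a.
Proof. rewrite ole_Fin_iff. split; [apply NNPP | tauto]. Qed.

Lemma ole_omeet z a b : ole z (omeet a b) <-> ole z a /\ ole z b.
Proof. om_cases; split; intros; try tauto; lia. Qed.
Lemma omeet_ole a b z : ole (omeet a b) z <-> ole a z \/ ole b z.
Proof. om_cases; split; intros; try tauto; lia. Qed.
Lemma ojoin_ole a b z : ole (ojoin a b) z <-> ole a z /\ ole b z.
Proof. om_cases; split; intros; try tauto; lia. Qed.
Lemma ole_ojoin z a b : ole z (ojoin a b) <-> ole z a \/ ole z b.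
Proof. om_cases; split; intros; try tauto; lia. Qed.

Lemma ole_iff_omeet_eq x y : ole x y <-> omeet x y = x.
Proof.
  destruct x as [a|], y as [b|]; simpl; split; intros H; auto; try easy.
  - f_equal; lia.
  - injection H; lia.
Qed.

Lemma Om_of_ge_all_Fin a : (forall k, ole (Fin k) a) -> a = Om.
Proof. destruct a as [n|]; auto. intros H. specialize (H (S n)). simpl in H. lia. Qed.

Lemma ojoin_0l a : ojoin (Fin 0) a = a. Proof. om_cases. Qed.
Lemma ojoin_0r a : ojoin a (Fin 0) = a. Proof. om_cases. Qed.
Lemma ojoin_Omr a : ojoin a Om = Om. Proof. om_cases. Qed.
Lemma omeet_Oml a : omeet Om a = a. Proof. om_cases. Qed.
Lemma omeet_Omr a : omeet a Om = a. Proof. om_cases. Qed.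
Lemma ojoin_assoc a b c : ojoin a (ojoin b c) = ojoin (ojoin a b) c. Proof. om_cases. Qed.
Lemma omeet_assoc a b c : omeet a (omeet b c) = omeet (omeet a b) c. Proof. om_cases. Qed.
Lemma ojoin_omeet_distr_l a b c : ojoin a (omeet b c) = omeet (ojoin a b) (ojoin a c).
Proof. om_cases. Qed.
Lemma ojoin_omeet_distr_r a b c : ojoin (omeet a b) c = omeet (ojoin a c) (ojoin b c).
Proof. om_cases. Qed.

Lemma is_lub_unique P x y : is_lub P x -> is_lub P y -> x = y.
Proof. intros [Hx1 Hx2] [Hy1 Hy2]. apply ole_antisym; auto. Qed.

Lemma is_lub_ext P Q x : (forall y, P y <-> Q y) -> is_lub P x -> is_lub Q x.
Proof. intros E [H1 H2]. split; [intros y Hy | intros z Hz; apply H2; intros y Hy]; firstorder. Qed.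

Lemma is_lub_exists P : exists x, is_lub P x.
Proof.
  assert (Hbounded : forall n, (forall y, P y -> ole y (Fin n)) -> exists x, is_lub P x).
  { induction n as [|n IH]; intros Hb.
    - exists (Fin 0). split; auto. intros; apply ole_bot.
    - destruct (classic (P (Fin (S n)))) as [Hin|Hnin].
      + exists (Fin (S n)). split; auto.
      + apply IH. intros y Hy. specialize (Hb y Hy).
        destruct y as [m|]; simpl in *; try contradiction.
        destruct (Nat.eq_dec m (S n)); [subst; contradiction | lia]. }
  destruct (classic (exists n, forall y, P y -> ole y (Fin n))) as [[n Hn]|Hn]; eauto.
  exists Om. split; [intros; apply ole_top|]. intros [m|] Hz; simpl; auto.
  exfalso; eauto.
Qed.

Lemma omsup_is_lub P : is_lub P (omsup P).
Proof. unfold omsup. apply epsilon_spec, is_lub_exists. Qed.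

Lemma omsup_eq P x : is_lub P x -> omsup P = x.
Proof. intros; eapply is_lub_unique; eauto using omsup_is_lub. Qed.

Lemma is_lub_Fin : is_lub (fun z => exists n, z = Fin n) Om.
Proof.
  split; [intros; apply ole_top|]. intros z Hz.
  rewrite (Om_of_ge_all_Fin z); [apply ole_refl | eauto].
Qed.

(** * Time warps *)

Section TimeWarp.
Variable f : om -> om.
Hypothesis Hf : time_warp f.

Lemma time_warp_0 : f (Fin 0) = Fin 0.
Proof.
  assert (L : is_lub (fun _ => False) (Fin 0)) by (split; [tauto | intros; apply ole_bot]).
  apply ole_antisym; [|apply ole_bot]. apply (proj2 (Hf _ _ L)). intros y [z [[] _]].
Qed.

Lemma time_warp_mono x y : ole x y -> ole (f x) (f y).
Proof.
  intros Hxy. assert (L : is_lub (fun z => z = x \/ z = y) y).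
  { split; [intros z [-> | ->]; auto using ole_refl | intros z Hz; apply Hz; auto]. }
  apply (proj1 (Hf _ _ L)). exists x; auto.
Qed.

Lemma time_warp_Om_le w : (forall n, ole (f (Fin n)) w) -> ole (f Om) w.
Proof. intros Hw. apply (proj2 (Hf _ _ is_lub_Fin)). intros y [z [[n ->] ->]]. auto. Qed.

Lemma time_warp_Om_is_lub : is_lub (fun y => exists n, y = f (Fin n)) (f Om).
Proof.
  split; [intros y [n ->]; apply time_warp_mono, ole_top|].
  intros z Hz. apply time_warp_Om_le. eauto.
Qed.

Lemma time_warp_ojoin u v : f (ojoin u v) = ojoin (f u) (f v).
Proof.
  destruct (ole_total u v) as [H|H].
  - replace (ojoin u v) with v by (revert H; om_cases).
    pose proof (time_warp_mono _ _ H); revert H0; generalize (f u) (f v); om_cases.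
  - replace (ojoin u v) with u by (revert H; om_cases).
    pose proof (time_warp_mono _ _ H); revert H0; generalize (f u) (f v); om_cases.
Qed.

Lemma time_warp_omeet u v : f (omeet u v) = omeet (f u) (f v).
Proof.
  destruct (ole_total u v) as [H|H].
  - replace (omeet u v) with u by (revert H; om_cases).
    pose proof (time_warp_mono _ _ H); revert H0; generalize (f u) (f v); om_cases.
  - replace (omeet u v) with v by (revert H; om_cases).
    pose proof (time_warp_mono _ _ H); revert H0; generalize (f u) (f v); om_cases.
Qed.

End TimeWarp.

Lemma time_warp_intro f :
  f (Fin 0) = Fin 0 -> (forall x y, ole x y -> ole (f x) (f y)) ->
  (forall w, (forall n, ole (f (Fin n)) w) -> ole (f Om) w) -> time_warp f.
Proof.
  intros H0 Hmono Hcont P x [Hub Hleast]. split.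
  - intros y [z [Hz ->]]. apply Hmono, Hub, Hz.
  - intros w Hw. destruct x as [[|k]|].
    + rewrite H0. apply ole_bot.
    + destruct (classic (P (Fin (S k)))) as [Hin|Hnin]; [apply Hw; eauto|].
      exfalso. assert (HH : ole (Fin (S k)) (Fin k)); [|simpl in HH; lia].
      apply Hleast. intros y Hy. specialize (Hub y Hy).
      destruct y as [n|]; simpl in *; auto.
      destruct (Nat.eq_dec n (S k)); [subst; contradiction | lia].
    + apply Hcont. intros n.
      destruct (classic (exists z, P z /\ ole (Fin n) z)) as [[z [Hz Hnz]]|Hno].
      * apply ole_trans with (f z); [apply Hmono, Hnz | apply Hw; eauto].
      * exfalso. assert (HH : ole Om (Fin n)); [|exact HH].
        apply Hleast. intros y Hy. destruct (ole_total y (Fin n)); auto.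
        exfalso; eauto.
Qed.

Lemma time_warp_ext f g : (forall x, f x = g x) -> time_warp f -> time_warp g.
Proof.
  intros E Hf P x Hx. rewrite <- E. eapply is_lub_ext; [|exact (Hf P x Hx)].
  intros y; split; intros [z [Hz ->]]; exists z; split; auto.
Qed.

Lemma time_warp_id : time_warp (fun x => x).
Proof.
  apply time_warp_intro; auto. intros w Hw. rewrite (Om_of_ge_all_Fin w Hw). apply ole_refl.
Qed.

Lemma time_warp_const0 : time_warp (fun _ => Fin 0).
Proof. apply time_warp_intro; auto; intros; apply ole_bot. Qed.

Lemma time_warp_comp f g : time_warp f -> time_warp g -> time_warp (fun x => f (g x)).
Proof.
  intros Hf Hg. apply time_warp_intro.
  - rewrite (time_warp_0 g Hg). apply time_warp_0, Hf.
  - intros x y H. apply (time_warp_mono f Hf), (time_warp_mono g Hg), H.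
  - intros w Hw. apply (proj2 (Hf _ _ (time_warp_Om_is_lub g Hg))).
    intros y [z [[n ->] ->]]. auto.
Qed.

Lemma time_warp_pointwise_ojoin f g :
  time_warp f -> time_warp g -> time_warp (fun x => ojoin (f x) (g x)).
Proof.
  intros Hf Hg. apply time_warp_intro.
  - rewrite (time_warp_0 g Hg), (time_warp_0 f Hf). reflexivity.
  - intros x y H. apply ojoin_ole; split; apply ole_ojoin; [left|right].
    + apply (time_warp_mono f Hf), H.
    + apply (time_warp_mono g Hg), H.
  - intros w Hw. apply ojoin_ole; split; apply time_warp_Om_le; auto;
      intros n; apply (proj1 (ojoin_ole _ _ _) (Hw n)).
Qed.

Lemma time_warp_pointwise_omeet f g :
  time_warp f -> time_warp g -> time_warp (fun x => omeet (f x) (g x)).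
Proof.
  intros Hf Hg. apply time_warp_intro.
  - rewrite (time_warp_0 g Hg), (time_warp_0 f Hf). reflexivity.
  - intros x y H. apply ole_omeet; split; apply omeet_ole; [left|right].
    + apply (time_warp_mono f Hf), H.
    + apply (time_warp_mono g Hg), H.
  - intros w Hw. apply omeet_ole.
    destruct (classic (ole (f Om) w)) as [Hfw|Hfw]; [left; exact Hfw | right].
    (* f exceeds w from some n0 on, so from there on g must stay below w *)
    destruct (not_all_ex_not _ _ (fun H => Hfw (time_warp_Om_le f Hf w H))) as [n0 Hn0].
    apply time_warp_Om_le; auto. intros n. destruct (Nat.le_ge_cases n n0).
    + apply ole_trans with (g (Fin n0)); [apply (time_warp_mono g Hg); simpl; auto|].
      destruct (proj1 (omeet_ole _ _ _) (Hw n0)); tauto.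
    + destruct (proj1 (omeet_ole _ _ _) (Hw n)) as [Hn|]; auto. exfalso; apply Hn0.
      apply ole_trans with (f (Fin n)); auto. apply (time_warp_mono f Hf); simpl; auto.
Qed.

(** * Residuals and the star *)

Section Residual.
Variables f g : om -> om.

Lemma resid_is_lub x :
  is_lub (fun y => exists h, time_warp h /\ (forall z, ole (f (h z)) (g z)) /\ y = h x)
         (resid f g x).
Proof. apply omsup_is_lub. Qed.

Lemma le_resid h : time_warp h -> (forall z, ole (f (h z)) (g z)) ->
  forall x, ole (h x) (resid f g x).
Proof. intros Hh Hz x. apply (proj1 (resid_is_lub x)). eauto. Qed.

Lemma time_warp_resid : time_warp (resid f g).
Proof.
  apply time_warp_intro.
  - apply ole_antisym; [|apply ole_bot]. apply (proj2 (resid_is_lub (Fin 0))).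
    intros y [h [Hh [_ ->]]]. rewrite (time_warp_0 h Hh). apply ole_refl.
  - intros x y Hxy. apply (proj2 (resid_is_lub x)). intros z [h [Hh [Hz ->]]].
    apply ole_trans with (h y); [apply (time_warp_mono h Hh), Hxy | apply le_resid; auto].
  - intros w Hw. apply (proj2 (resid_is_lub Om)). intros z [h [Hh [Hz ->]]].
    apply time_warp_Om_le; auto. intros n.
    apply ole_trans with (resid f g (Fin n)); auto. apply le_resid; auto.
Qed.

Lemma resid_cancel : time_warp f -> forall x, ole (f (resid f g x)) (g x).
Proof.
  intros Hf x. apply (proj2 (Hf _ _ (resid_is_lub x))).
  intros y [z [[h [Hh [Hz ->]]] ->]]. auto.
Qed.

End Residual.

Lemma resid_ext f f' g x : (forall y, f y = f' y) -> resid f g x = resid f' g x.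
Proof.
  intros E. apply omsup_eq. eapply is_lub_ext; [|apply resid_is_lub].
  intros y; split; intros [h [Hh [Hz ->]]]; exists h; (split; [exact Hh|]);
    (split; [|reflexivity]); intros z; specialize (Hz z); rewrite ?E in *; exact Hz.
Qed.

Lemma pmap_FinS n : pmap (Fin (S n)) = Fin n.
Proof.
  apply omsup_eq. split.
  - intros y [k [-> [H1 H2]]]. simpl in *. assert (k <> S n) by (intros ->; auto). lia.
  - intros z Hz. apply Hz. exists n. split; [reflexivity|]. split; [simpl; lia|].
    intros E; injection E; lia.
Qed.

Lemma pmap_Om : pmap Om = Om.
Proof.
  apply omsup_eq. split; [intros; apply ole_top|].
  intros z Hz. rewrite (Om_of_ge_all_Fin z); [apply ole_refl|].
  intros k. apply Hz. exists k. split; [reflexivity|]. split; [apply ole_top | discriminate].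
Qed.

Lemma time_warp_wstar f : time_warp (wstar f).
Proof. apply time_warp_resid. Qed.

Lemma wstar_cancel f : time_warp f -> forall x, ole (f (wstar f x)) (pmap x).
Proof. apply resid_cancel. Qed.

Lemma le_wstar f h : time_warp h -> (forall z, ole (f (h z)) (pmap z)) ->
  forall x, ole (h x) (wstar f x).
Proof. apply le_resid. Qed.

Lemma wstar_ext f f' : (forall y, f y = f' y) -> forall x, wstar f x = wstar f' x.
Proof. intros; apply resid_ext; auto. Qed.

Definition step_warp (n : nat) (y x : om) : om :=
  match x with Fin k => if k <=? n then Fin 0 else y | Om => y end.

Lemma time_warp_step_warp n y : time_warp (step_warp n y).
Proof.
  apply time_warp_intro; [reflexivity | |].
  - intros [a|] [b|]; simpl; intros H; try contradiction; try apply ole_refl.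
    + destruct (a <=? n) eqn:Ea; [apply ole_bot|]. destruct (b <=? n) eqn:Eb; [|apply ole_refl].
      apply Nat.leb_le in Eb. apply Nat.leb_nle in Ea. lia.
    + destruct (a <=? n); [apply ole_bot | apply ole_refl].
  - intros w Hw. specialize (Hw (S n)). unfold step_warp in Hw.
    rewrite (proj2 (Nat.leb_nle (S n) n)) in Hw by lia. exact Hw.
Qed.

Lemma le_wstar_FinS f n y : time_warp f ->
  ole y (wstar f (Fin (S n))) <-> ole (f y) (Fin n).
Proof.
  intros Hf. split; intros H.
  - rewrite <- pmap_FinS. apply ole_trans with (f (wstar f (Fin (S n)))).
    + apply (time_warp_mono f Hf), H.
    + apply wstar_cancel; auto.
  - replace y with (step_warp n y (Fin (S n)))
      by (unfold step_warp; rewrite (proj2 (Nat.leb_nle (S n) n)) by lia; reflexivity).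
    apply le_wstar; [apply time_warp_step_warp|].
    intros [k|]; [|rewrite pmap_Om; apply ole_top]. simpl.
    destruct (k <=? n) eqn:Ek; [rewrite (time_warp_0 f Hf); apply ole_bot|].
    apply Nat.leb_nle in Ek. destruct k as [|j]; [lia|]. rewrite pmap_FinS.
    apply ole_trans with (Fin n); simpl; auto; lia.
Qed.

Lemma wstar_le_Fin f m z : time_warp f ->
  ole (wstar f z) (Fin m) <-> ole z (f (Fin (S m))).
Proof.
  intros Hf.
  assert (Hfin : forall k, ole (wstar f (Fin k)) (Fin m) <-> ole (Fin k) (f (Fin (S m)))).
  { intros [|k].
    - rewrite (time_warp_0 _ (time_warp_wstar f)). split; intros; apply ole_bot.
    - rewrite ole_Fin_iff, le_wstar_FinS, not_ole_Fin by exact Hf. reflexivity. }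
  destruct z as [k|]; [apply Hfin|]. split; intros H.
  - rewrite (Om_of_ge_all_Fin (f (Fin (S m)))); [apply ole_refl|].
    intros k. apply Hfin. apply ole_trans with (wstar f Om); auto.
    apply (time_warp_mono _ (time_warp_wstar f)), ole_top.
  - apply time_warp_Om_le; [apply time_warp_wstar|]. intros n. apply Hfin.
    apply ole_trans with Om; auto. apply ole_top.
Qed.

Lemma wstar_involutive f : time_warp f -> forall x, wstar (wstar f) x = f x.
Proof.
  intros Hf. assert (Hfin : forall n, wstar (wstar f) (Fin n) = f (Fin n)).
  { intros [|m].
    - rewrite (time_warp_0 _ (time_warp_wstar _)), (time_warp_0 _ Hf). reflexivity.
    - apply ole_antisym.
      + apply (wstar_le_Fin f m _ Hf), (le_wstar_FinS _ _ _ (time_warp_wstar f)), ole_refl.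
      + apply (le_wstar_FinS _ _ _ (time_warp_wstar f)), (wstar_le_Fin f m _ Hf), ole_refl. }
  intros [n|]; [apply Hfin|].
  apply ole_antisym; apply time_warp_Om_le; auto using time_warp_wstar; intros n.
  - rewrite Hfin. apply (time_warp_mono f Hf), ole_top.
  - rewrite <- Hfin. apply (time_warp_mono _ (time_warp_wstar _)), ole_top.
Qed.

Lemma wstar_antitone f g : time_warp g -> (forall x, ole (f x) (g x)) ->
  forall x, ole (wstar g x) (wstar f x).
Proof.
  intros Hg H. apply le_wstar; [apply time_warp_wstar|]. intros z.
  apply ole_trans with (g (wstar g z)); auto. apply wstar_cancel; auto.
Qed.

Lemma wstar_ojoin f g : time_warp f -> time_warp g ->
  forall x, wstar (fun y => ojoin (f y) (g y)) x = omeet (wstar f x) (wstar g x).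
Proof.
  intros Hf Hg x. apply ole_antisym.
  - apply ole_omeet; split; apply wstar_antitone; auto using time_warp_pointwise_ojoin;
      intros y; apply ole_ojoin; auto using ole_refl.
  - apply (le_wstar _ (fun x => omeet (wstar f x) (wstar g x)));
      [apply time_warp_pointwise_omeet; apply time_warp_wstar|].
    intros z. apply ojoin_ole; split.
    + apply ole_trans with (f (wstar f z)); [|apply wstar_cancel; auto].
      apply (time_warp_mono f Hf), omeet_ole; left; apply ole_refl.
    + apply ole_trans with (g (wstar g z)); [|apply wstar_cancel; auto].
      apply (time_warp_mono g Hg), omeet_ole; right; apply ole_refl.
Qed.

Lemma wstar_omeet f g : time_warp f -> time_warp g ->
  forall x, wstar (fun y => omeet (f y) (g y)) x = ojoin (wstar f x) (wstar g x).
Proof.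
  intros Hf Hg x.
  assert (E : forall y, omeet (f y) (g y) = wstar (fun y => ojoin (wstar f y) (wstar g y)) y).
  { intros y. rewrite wstar_ojoin by apply time_warp_wstar.
    rewrite !wstar_involutive; auto. }
  rewrite (wstar_ext _ _ E), wstar_involutive; [reflexivity|].
  apply time_warp_pointwise_ojoin; apply time_warp_wstar.
Qed.

Lemma id_le_wstar_iff h : time_warp h ->
  (forall x, ole x (wstar h x)) <-> (forall x, ole (h x) (pmap x)).
Proof.
  intros Hh. split; intros H x.
  - apply ole_trans with (h (wstar h x)); [apply (time_warp_mono h Hh), H|].
    apply wstar_cancel; auto.
  - apply (le_wstar h (fun x => x)); auto using time_warp_id.
Qed.

Lemma wstar_comp_le_pmap_iff f g : time_warp f -> time_warp g ->
  (forall x, ole (wstar g (f x)) (pmap x)) <-> (forall x, ole (f x) (g x)).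
Proof.
  intros Hf Hg. split; intros H x.
  - rewrite <- (wstar_involutive g Hg x). apply le_wstar; auto.
  - apply ole_trans with (wstar g (g x)); [apply (time_warp_mono _ (time_warp_wstar g)), H|].
    rewrite <- (wstar_involutive g Hg x) at 1. apply wstar_cancel, time_warp_wstar.
Qed.

Lemma time_warp_teval sigma : (forall i, time_warp (sigma i)) ->
  forall u, time_warp (teval sigma u).
Proof.
  intros Hs u; induction u; simpl;
    auto using time_warp_pointwise_omeet, time_warp_pointwise_ojoin, time_warp_comp,
      time_warp_wstar, time_warp_id.
Qed.

Definition eq_test (s t : term) : term :=
  TMeet (TStar (TMul (TStar t) s)) (TStar (TMul (TStar s) t)).

Lemma le_iff_one_le_star_comp sigma s t : (forall i, time_warp (sigma i)) ->
  (forall x, ole (teval sigma s x) (teval sigma t x)) <->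
  (forall x, ole x (teval sigma (TStar (TMul (TStar t) s)) x)).
Proof.
  intros Hs. pose proof (time_warp_teval sigma Hs s). pose proof (time_warp_teval sigma Hs t).
  simpl. rewrite id_le_wstar_iff, wstar_comp_le_pmap_iff;
    auto using time_warp_comp, time_warp_wstar.
  reflexivity.
Qed.

Lemma W_models_eq_iff_eq_test s t : W_models_eq s t <-> W_models_le TOne (eq_test s t).
Proof.
  split.
  - intros H sigma Hs x. simpl. apply ole_omeet.
    split; revert x; apply le_iff_one_le_star_comp; auto; intros x; rewrite H; auto; apply ole_refl.
  - intros H sigma Hs x.
    assert (Hst := fun x => proj1 (proj1 (ole_omeet _ _ _) (H sigma Hs x))).
    assert (Hts := fun x => proj2 (proj1 (ole_omeet _ _ _) (H sigma Hs x))).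
    apply ole_antisym; revert x; apply le_iff_one_le_star_comp; auto.
Qed.

(** * Normal forms *)

Definition ojoins (l : list om) : om := fold_right ojoin (Fin 0) l.
Definition omeets (l : list om) : om := fold_right omeet Om l.

Lemma ojoins_app l1 l2 : ojoins (l1 ++ l2) = ojoin (ojoins l1) (ojoins l2).
Proof.
  induction l1; cbn [app]; [symmetry; apply ojoin_0l|].
  unfold ojoins in *; cbn [fold_right]. now rewrite IHl1, ojoin_assoc.
Qed.

Lemma omeets_app l1 l2 : omeets (l1 ++ l2) = omeet (omeets l1) (omeets l2).
Proof.
  induction l1; cbn [app]; [symmetry; apply omeet_Oml|].
  unfold omeets in *; cbn [fold_right]. now rewrite IHl1, omeet_assoc.
Qed.

Lemma ole_omeets z l : ole z (omeets l) <-> forall b, In b l -> ole z b.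
Proof.
  induction l; simpl; [split; [tauto | intros; apply ole_top]|].
  rewrite ole_omeet, IHl. firstorder congruence.
Qed.

Lemma time_warp_ojoins f l : time_warp f -> f (ojoins l) = ojoins (map f l).
Proof.
  intros Hf. induction l; simpl; [apply time_warp_0, Hf|].
  rewrite time_warp_ojoin, IHl; auto.
Qed.

(* A time warp need not preserve the empty meet [Om]. *)
Lemma time_warp_omeets f l : time_warp f -> l <> [] -> f (omeets l) = omeets (map f l).
Proof.
  intros Hf. induction l as [|a [|b l] IH]; intros Hne; [congruence| |].
  - simpl. now rewrite !omeet_Omr.
  - change (f (omeet a (omeets (b :: l))) = omeet (f a) (omeets (map f (b :: l)))).
    rewrite time_warp_omeet, IH; auto. discriminate.
Qed.

(* A list of lists of terms denotes the meet of the joins of its members. *)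
Definition cnf_join (L M : list (list term)) : list (list term) :=
  flat_map (fun C => map (fun D => C ++ D) M) L.
Definition cnf_joins (Ls : list (list (list term))) : list (list term) :=
  fold_right cnf_join [[]] Ls.
Definition cnf_prefix (a : term) (M : list (list term)) : list (list term) :=
  map (map (TMul a)) M.
Definition cnf_mul (L M : list (list term)) : list (list term) :=
  flat_map (fun C => cnf_joins (map (fun a => cnf_prefix a M) C)) L.
Definition cnf_star (L : list (list term)) : list (list term) :=
  cnf_joins (map (map (fun a => [TStar a])) L).

Fixpoint cnf (u : term) : list (list term) :=
  match u with
  | TVar i => [[TVar i]]
  | TOne => [[TOne]]
  | TMeet s t => cnf s ++ cnf t
  | TJoin s t => cnf_join (cnf s) (cnf t)
  | TMul s t => cnf_mul (cnf s) (cnf t)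
  | TStar s => cnf_star (cnf s)
  end.

Section CnfValue.
Variable sigma : nat -> om -> om.
Hypothesis Hsigma : forall i, time_warp (sigma i).

Definition clause_val (C : list term) (x : om) : om := ojoins (map (fun t => teval sigma t x) C).
Definition cnf_val (L : list (list term)) (x : om) : om := omeets (map (fun C => clause_val C x) L).

Lemma clause_val_app C D x : clause_val (C ++ D) x = ojoin (clause_val C x) (clause_val D x).
Proof. unfold clause_val. now rewrite map_app, ojoins_app. Qed.

Lemma cnf_val_app L M x : cnf_val (L ++ M) x = omeet (cnf_val L x) (cnf_val M x).
Proof. unfold cnf_val. now rewrite map_app, omeets_app. Qed.

Lemma cnf_val_flat_map (g : list term -> list (list term)) L x :
  cnf_val (flat_map g L) x = omeets (map (fun C => cnf_val (g C) x) L).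
Proof. induction L; simpl; auto. now rewrite cnf_val_app, IHL. Qed.

Lemma cnf_val_join L M x : cnf_val (cnf_join L M) x = ojoin (cnf_val L x) (cnf_val M x).
Proof.
  assert (Hrow : forall C,
    cnf_val (map (fun D => C ++ D) M) x = ojoin (clause_val C x) (cnf_val M x)).
  { intros C. induction M; [symmetry; apply ojoin_Omr|].
    unfold cnf_val in *; simpl. now rewrite IHM, clause_val_app, ojoin_omeet_distr_l. }
  unfold cnf_join. rewrite cnf_val_flat_map. induction L; simpl; [reflexivity|].
  now rewrite IHL, Hrow, <- ojoin_omeet_distr_r.
Qed.

Lemma cnf_val_joins Ls x : cnf_val (cnf_joins Ls) x = ojoins (map (fun L => cnf_val L x) Ls).
Proof. induction Ls; simpl; [reflexivity | now rewrite cnf_val_join, IHLs]. Qed.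

Lemma cnf_val_prefix a M x : M <> [] ->
  cnf_val (cnf_prefix a M) x = teval sigma a (cnf_val M x).
Proof.
  intros HM. pose proof (time_warp_teval sigma Hsigma a) as Ha. unfold cnf_val, cnf_prefix.
  rewrite (time_warp_omeets _ _ Ha) by (destruct M; simpl; congruence).
  rewrite !map_map. apply f_equal, map_ext. intros D. unfold clause_val.
  now rewrite map_map, (time_warp_ojoins _ _ Ha), map_map.
Qed.

Lemma cnf_val_mul L M x : M <> [] -> cnf_val (cnf_mul L M) x = cnf_val L (cnf_val M x).
Proof.
  intros HM. unfold cnf_mul. rewrite cnf_val_flat_map. unfold cnf_val at 2.
  apply f_equal, map_ext. intros C. rewrite cnf_val_joins, map_map. unfold clause_val.
  apply f_equal, map_ext. intros a. now apply cnf_val_prefix.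
Qed.

Lemma cnf_val_star L x :
  cnf_val (cnf_star L) x =
  ojoins (map (fun C => omeets (map (fun a => wstar (teval sigma a) x) C)) L).
Proof.
  unfold cnf_star. rewrite cnf_val_joins, map_map. apply f_equal, map_ext. intros C.
  unfold cnf_val. rewrite map_map. apply f_equal, map_ext. intros a. apply ojoin_0r.
Qed.

Lemma time_warp_clause_val C : time_warp (clause_val C).
Proof.
  induction C; simpl; [apply time_warp_const0|].
  apply (time_warp_pointwise_ojoin (teval sigma a) (clause_val C)); auto.
  apply time_warp_teval; auto.
Qed.

Lemma time_warp_cnf_val L : L <> [] -> time_warp (cnf_val L).
Proof.
  induction L as [|C [|D L] IH]; intros Hne; [congruence| |].
  - apply (time_warp_ext (clause_val C)); [symmetry; apply omeet_Omr|].
    apply time_warp_clause_val.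
  - apply (time_warp_pointwise_omeet (clause_val C) (cnf_val (D :: L))).
    + apply time_warp_clause_val.
    + apply IH. discriminate.
Qed.

Lemma wstar_clause_val C x : C <> [] ->
  wstar (clause_val C) x = omeets (map (fun a => wstar (teval sigma a) x) C).
Proof.
  induction C as [|a [|b C] IH]; intros Hne; [congruence| |].
  - simpl. rewrite omeet_Omr. apply wstar_ext. intros y. apply ojoin_0r.
  - change (wstar (fun y => ojoin (teval sigma a y) (clause_val (b :: C) y)) x =
            omeet (wstar (teval sigma a) x)
                  (omeets (map (fun a => wstar (teval sigma a) x) (b :: C)))).
    rewrite wstar_ojoin, IH; auto using time_warp_teval, time_warp_clause_val. discriminate.
Qed.

Lemma wstar_cnf_val L x : L <> [] -> (forall C, In C L -> C <> []) ->
  wstar (cnf_val L) x = ojoins (map (fun C => omeets (map (fun a => wstar (teval sigma a) x) C)) L).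
Proof.
  induction L as [|C [|D L] IH]; intros Hne HC; [congruence| |].
  - simpl. rewrite ojoin_0r, <- wstar_clause_val by (apply HC; simpl; auto).
    apply wstar_ext. intros y; apply omeet_Omr.
  - change (wstar (fun y => omeet (clause_val C y) (cnf_val (D :: L) y)) x =
      ojoin (omeets (map (fun a => wstar (teval sigma a) x) C))
            (ojoins (map (fun C => omeets (map (fun a => wstar (teval sigma a) x) C)) (D :: L)))).
    rewrite wstar_omeet, wstar_clause_val, IH; auto using time_warp_clause_val.
    + discriminate.
    + intros; apply HC; simpl; auto.
    + apply HC; simpl; auto.
    + apply time_warp_cnf_val. discriminate.
Qed.

End CnfValue.

Definition wf_clause (C : list term) : Prop := C <> [] /\ forall t, In t C -> is_basic t.
Definition wf_cnf (L : list (list term)) : Prop := L <> [] /\ forall C, In C L -> wf_clause C.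

Lemma wf_cnf_singleton t : is_basic t -> wf_cnf [[t]].
Proof.
  split; [discriminate|]. intros C [<- | []].
  split; [discriminate | intros u [<- | []]; exact H].
Qed.

Lemma wf_cnf_app L M : wf_cnf L -> wf_cnf M -> wf_cnf (L ++ M).
Proof.
  intros [HL1 HL2] [HM1 HM2]. split; [destruct L; simpl; congruence|].
  intros C HC. apply in_app_or in HC. destruct HC; auto.
Qed.

Lemma wf_cnf_join L M : wf_cnf L -> wf_cnf M -> wf_cnf (cnf_join L M).
Proof.
  intros [HL1 HL2] [HM1 HM2]. split.
  - destruct L as [|C L], M as [|D M]; try congruence. discriminate.
  - unfold cnf_join. intros E HE. apply in_flat_map in HE as [C [HC HE]].
    apply in_map_iff in HE as [D [<- HD]].
    destruct (HL2 C HC) as [HC1 HC2], (HM2 D HD) as [HD1 HD2]. split.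
    + destruct C; simpl; congruence.
    + intros t Ht. apply in_app_or in Ht as [Ht|Ht]; auto.
Qed.

Lemma cnf_join_nil_r L : cnf_join L [[]] = L.
Proof.
  induction L as [|C L IH]; [reflexivity|]. cbn [cnf_join flat_map map app].
  rewrite app_nil_r. f_equal. exact IH.
Qed.

Lemma wf_cnf_joins Ls : Ls <> [] -> (forall L, In L Ls -> wf_cnf L) -> wf_cnf (cnf_joins Ls).
Proof.
  induction Ls as [|L [|L' Ls] IH]; intros Hne HLs; [congruence| |].
  - simpl. rewrite cnf_join_nil_r. apply HLs; simpl; auto.
  - change (wf_cnf (cnf_join L (cnf_joins (L' :: Ls)))).
    apply wf_cnf_join; [apply HLs; simpl; auto|].
    apply IH; [discriminate | intros; apply HLs; simpl; auto].
Qed.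

Lemma wf_cnf_mul L M : wf_cnf L -> wf_cnf M -> wf_cnf (cnf_mul L M).
Proof.
  intros [HL1 HL2] [HM1 HM2].
  assert (G : forall C, In C L -> wf_cnf (cnf_joins (map (fun a => cnf_prefix a M) C))).
  { intros C HC. destruct (HL2 C HC) as [HC1 HC2]. apply wf_cnf_joins.
    - destruct C; simpl; congruence.
    - intros L' HL'. apply in_map_iff in HL' as [a [<- Ha]]. split.
      + destruct M; simpl; congruence.
      + intros D HD. apply in_map_iff in HD as [D' [<- HD']].
        destruct (HM2 _ HD') as [HD1 HD2]. split; [destruct D'; simpl; congruence|].
        intros t Ht. apply in_map_iff in Ht as [b [<- Hb]]. simpl; auto. }
  split.
  - destruct L as [|C L]; [congruence|]. simpl.
    destruct (G C (or_introl eq_refl)) as [G1 _]. destruct (cnf_joins _); simpl; congruence.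
  - intros D HD. apply in_flat_map in HD as [C [HC HD]]. apply (G C HC); auto.
Qed.

Lemma wf_cnf_star L : wf_cnf L -> wf_cnf (cnf_star L).
Proof.
  intros [HL1 HL2]. apply wf_cnf_joins; [destruct L; simpl; congruence|].
  intros L' HL'. apply in_map_iff in HL' as [C [<- HC]].
  destruct (HL2 C HC) as [HC1 HC2]. split; [destruct C; simpl; congruence|].
  intros D HD. apply in_map_iff in HD as [a [<- Ha]].
  split; [discriminate|]. intros t [<- | []]. simpl; auto.
Qed.

Lemma wf_cnf_cnf u : wf_cnf (cnf u).
Proof.
  induction u; simpl; auto using wf_cnf_app, wf_cnf_join, wf_cnf_mul, wf_cnf_star;
    apply wf_cnf_singleton; exact I.
Qed.

Lemma teval_cnf sigma : (forall i, time_warp (sigma i)) ->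
  forall u x, teval sigma u x = cnf_val sigma (cnf u) x.
Proof.
  intros Hs u. induction u; intros x; simpl.
  - unfold cnf_val, clause_val; simpl. now rewrite omeet_Omr, ojoin_0r.
  - now rewrite cnf_val_app, IHu1, IHu2.
  - now rewrite cnf_val_join, IHu1, IHu2.
  - rewrite cnf_val_mul, <- IHu2; [apply IHu1 | exact Hs | apply wf_cnf_cnf].
  - destruct (wf_cnf_cnf u) as [Hne Hcl].
    rewrite cnf_val_star, (wstar_ext _ _ IHu), wstar_cnf_val; auto.
    intros C HC; apply Hcl, HC.
  - unfold cnf_val, clause_val; simpl. now rewrite omeet_Omr, ojoin_0r.
Qed.

Lemma teval_bigjoin sigma a r x : teval sigma (bigjoin a r) x = clause_val sigma (a :: r) x.
Proof.
  revert a; induction r as [|b r IH]; intros a; simpl.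
  - symmetry; apply ojoin_0r.
  - now rewrite IH.
Qed.

Definition clause_split (C : list term) : term * list term := (hd TOne C, tl C).

Lemma one_le_iff_one_le_clauses u :
  W_models_le TOne u <->
  Forall (fun l => W_models_le TOne (bigjoin (fst l) (snd l))) (map clause_split (cnf u)).
Proof.
  rewrite Forall_map, Forall_forall. split.
  - intros H C HC sigma Hs x. simpl.
    destruct C as [|a r]; [now destruct (proj2 (wf_cnf_cnf u) _ HC)|].
    rewrite teval_bigjoin. specialize (H sigma Hs x). simpl in H.
    rewrite teval_cnf in H by exact Hs. unfold cnf_val in H.
    apply ole_omeets with (b := clause_val sigma (a :: r) x) in H; auto.
    apply in_map_iff. eauto.
  - intros H sigma Hs x. simpl. rewrite teval_cnf by exact Hs. apply ole_omeets.
    intros b Hb. apply in_map_iff in Hb as [C [<- HC]].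
    destruct C as [|a r]; [now destruct (proj2 (wf_cnf_cnf u) _ HC)|].
    specialize (H _ HC sigma Hs x). simpl in H. now rewrite teval_bigjoin in H.
Qed.

Lemma cnf_clauses_basic u :
  Forall (fun l => Forall is_basic (fst l :: snd l)) (map clause_split (cnf u)).
Proof.
  rewrite Forall_map, Forall_forall. intros C HC.
  destruct (proj2 (wf_cnf_cnf u) C HC) as [Hne Hbasic].
  destruct C as [|a r]; [congruence|]. apply Forall_forall, Hbasic.
Qed.

(** * Primitive recursive functions *)

Definition computable1 (f : nat -> nat) : Type :=
  {c : recf | forall x, reval c [x] (f x)}.
Definition computable2 (f : nat -> nat -> nat) : Type :=
  {c : recf | forall x y, reval c [x; y] (f x y)}.
Definition computable3 (f : nat -> nat -> nat -> nat) : Type :=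
  {c : recf | forall x y z, reval c [x; y; z] (f x y z)}.

Inductive expr : Type :=
| EVar (i : nat)
| EConst (n : nat)
| EApp1 {f : nat -> nat} (Hf : computable1 f) (e : expr)
| EApp2 {f : nat -> nat -> nat} (Hf : computable2 f) (e1 e2 : expr)
| EApp3 {f : nat -> nat -> nat -> nat} (Hf : computable3 f) (e1 e2 e3 : expr).

Fixpoint expr_val (e : expr) (v : list nat) : nat :=
  match e with
  | EVar i => nth i v 0
  | EConst n => n
  | @EApp1 f _ e => f (expr_val e v)
  | @EApp2 f _ e1 e2 => f (expr_val e1 v) (expr_val e2 v)
  | @EApp3 f _ e1 e2 e3 => f (expr_val e1 v) (expr_val e2 v) (expr_val e3 v)
  end.

Fixpoint const_prog (n : nat) : recf :=
  match n with 0 => RZero | S m => RComp RSucc [const_prog m] end.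

Fixpoint expr_prog (e : expr) : recf :=
  match e with
  | EVar i => RProj i
  | EConst n => const_prog n
  | EApp1 Hf e => RComp (proj1_sig Hf) [expr_prog e]
  | EApp2 Hf e1 e2 => RComp (proj1_sig Hf) [expr_prog e1; expr_prog e2]
  | EApp3 Hf e1 e2 e3 => RComp (proj1_sig Hf) [expr_prog e1; expr_prog e2; expr_prog e3]
  end.

Lemma reval_const_prog n v : reval (const_prog n) v n.
Proof.
  induction n; simpl; [constructor|].
  eapply ev_comp; [apply evs_cons; [apply IHn | apply evs_nil] | apply ev_succ].
Qed.

Lemma reval_expr_prog e v : reval (expr_prog e) v (expr_val e v).
Proof.
  induction e; simpl; [apply ev_proj | apply reval_const_prog | ..];
    destruct Hf as [c Hc]; simpl; eapply ev_comp; try apply Hc;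
    repeat (apply evs_cons; [eauto|]); apply evs_nil.
Qed.

Definition computable1_expr (e : expr) f (E : forall x, expr_val e [x] = f x) : computable1 f.
Proof. exists (expr_prog e). intros x. rewrite <- E. apply reval_expr_prog. Defined.
Definition computable2_expr (e : expr) f (E : forall x y, expr_val e [x; y] = f x y) :
  computable2 f.
Proof. exists (expr_prog e). intros x y. rewrite <- E. apply reval_expr_prog. Defined.
Definition computable3_expr (e : expr) f (E : forall x y z, expr_val e [x; y; z] = f x y z) :
  computable3 f.
Proof. exists (expr_prog e). intros x y z. rewrite <- E. apply reval_expr_prog. Defined.

Definition computable1_comp {f g} (Hf : computable1 f) (Hg : computable1 g) :
  computable1 (fun x => f (g x)) :=
  computable1_expr (EApp1 Hf (EApp1 Hg (EVar 0))) _ (fun _ => eq_refl).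

Definition computable2_ext f g (Hf : computable2 f) (E : forall x y, f x y = g x y) : computable2 g.
Proof. destruct Hf as [c Hc]. exists c. intros x y. rewrite <- E. apply Hc. Defined.

Definition computable_succ : computable1 S.
Proof. exists RSucc. intros x. apply ev_succ. Defined.

Fixpoint prim_rec (g : nat -> nat) (h : nat -> nat -> nat -> nat) (n x : nat) : nat :=
  match n with 0 => g x | S m => h m (prim_rec g h m x) x end.

Definition computable_prim_rec g h (Hg : computable1 g) (Hh : computable3 h) :
  computable2 (prim_rec g h).
Proof.
  destruct Hg as [cg Hg], Hh as [ch Hh]. exists (RPrec cg ch). intros n x.
  induction n; simpl; [constructor; apply Hg | eapply ev_precS; [apply IHn | apply Hh]].
Defined.

Definition computable_const n : computable1 (fun _ => n) :=
  computable1_expr (EConst n) _ (fun _ => eq_refl).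

Definition computable1_rec z h (Hh : computable3 h) f
  (E : forall n, prim_rec (fun _ => z) h n 0 = f n) : computable1 f :=
  computable1_expr
    (EApp2 (computable_prim_rec _ _ (computable_const z) Hh)
       (EVar 0) (EConst 0)) f E.

Definition computable_id : computable1 (fun x => x) :=
  computable1_expr (EVar 0) _ (fun _ => eq_refl).

Definition computable_add : computable2 Nat.add.
Proof.
  refine (computable2_ext _ _ (computable_prim_rec _ (fun _ r _ => S r) computable_id
    (computable3_expr (EApp1 computable_succ (EVar 1)) _ (fun _ _ _ => eq_refl))) _).
  intros n x; induction n; simpl; auto.
Defined.

Definition computable_mul : computable2 Nat.mul.
Proof.
  refine (computable2_ext _ _ (computable_prim_rec (fun _ => 0) (fun _ r x => x + r)
    (computable_const 0)
    (computable3_expr (EApp2 computable_add (EVar 2) (EVar 1)) _ (fun _ _ _ => eq_refl))) _).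
  intros n x; induction n; simpl; auto.
Defined.

Definition computable_pred : computable1 Nat.pred :=
  computable1_rec 0 _ (computable3_expr (EVar 0) (fun m _ _ => m) (fun _ _ _ => eq_refl)) Nat.pred
    (fun n => match n with 0 => eq_refl | S _ => eq_refl end).

Definition computable_sub : computable2 Nat.sub.
Proof.
  pose (P := computable_prim_rec (fun x => x) (fun _ r _ => Nat.pred r) computable_id
    (computable3_expr (EApp1 computable_pred (EVar 1)) _ (fun _ _ _ => eq_refl))).
  refine (computable2_expr (EApp2 P (EVar 1) (EVar 0)) _ _). intros x y; simpl.
  induction y; simpl; [lia | rewrite IHy; lia].
Defined.

Definition ifz (c x y : nat) : nat := match c with 0 => x | S _ => y end.

Definition computable_ifz : computable3 ifz.
Proof.
  pose (is_zero := fun e => EApp2 computable_sub (EConst 1) e).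
  refine (computable3_expr
    (EApp2 computable_add (EApp2 computable_mul (EVar 1) (is_zero (EVar 0)))
                          (EApp2 computable_mul (EVar 2) (is_zero (is_zero (EVar 0))))) _ _).
  intros [|c] x y; simpl; lia.
Defined.

Fixpoint triangle (k : nat) : nat := match k with 0 => 0 | S m => triangle m + S m end.

Lemma triangle_mono a b : a <= b -> triangle a <= triangle b.
Proof. induction 1; simpl; lia. Qed.

Lemma le_triangle k : k <= triangle k.
Proof. induction k; simpl; lia. Qed.

Lemma cpair_triangle a b : cpair a b = triangle (a + b) + b.
Proof.
  assert (Hdouble : forall k, triangle k * 2 = k * (k + 1)) by (induction k; simpl; lia).
  unfold cpair. now rewrite <- Hdouble, Nat.div_mul.
Qed.

Definition computable_triangle : computable1 triangle.
Proof.
  refine (computable1_rec 0 _ (computable3_expr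
    (EApp2 computable_add (EVar 1) (EApp1 computable_succ (EVar 0))) (fun m r _ => r + S m)
    (fun _ _ _ => eq_refl)) _ _).
  induction n; simpl; auto.
Defined.

Fixpoint diag (n : nat) : nat :=
  match n with
  | 0 => 0
  | S m => if triangle (S (diag m)) <=? S m then S (diag m) else diag m
  end.

Lemma diag_spec n : triangle (diag n) <= n < triangle (S (diag n)).
Proof.
  induction n; simpl; [lia|].
  destruct (triangle (diag n) + S (diag n) <=? S n) eqn:E;
    [apply Nat.leb_le in E | apply Nat.leb_nle in E]; simpl in *; lia.
Qed.

Lemma diag_unique n k : triangle k <= n < triangle (S k) -> diag n = k.
Proof.
  intros Hk. pose proof (diag_spec n).
  destruct (Nat.lt_trichotomy (diag n) k) as [Hl|[Hl|Hl]]; auto.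
  - pose proof (triangle_mono (S (diag n)) k Hl). lia.
  - pose proof (triangle_mono (S k) (diag n) Hl). lia.
Qed.

Definition computable_diag : computable1 diag.
Proof.
  refine (computable1_rec 0 (fun m r _ => r + (1 - (triangle (S r) - S m))) (computable3_expr
    (EApp2 computable_add (EVar 1) (EApp2 computable_sub (EConst 1)
       (EApp2 computable_sub (EApp1 computable_triangle (EApp1 computable_succ (EVar 1)))
          (EApp1 computable_succ (EVar 0))))) _ (fun _ _ _ => eq_refl)) _ _).
  induction n; [reflexivity|]. cbn [prim_rec diag]. rewrite IHn.
  destruct (triangle (S (diag n)) <=? S n) eqn:E;
    [apply Nat.leb_le in E | apply Nat.leb_nle in E]; lia.
Defined.

Definition unpair2 (n : nat) : nat := n - triangle (diag n).
Definition unpair1 (n : nat) : nat := diag n - unpair2 n.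

Definition computable_unpair2 : computable1 unpair2 :=
  computable1_expr (EApp2 computable_sub (EVar 0) (EApp1 computable_triangle
    (EApp1 computable_diag (EVar 0)))) _ (fun _ => eq_refl).
Definition computable_unpair1 : computable1 unpair1 :=
  computable1_expr (EApp2 computable_sub (EApp1 computable_diag (EVar 0))
    (EApp1 computable_unpair2 (EVar 0))) _ (fun _ => eq_refl).

Lemma diag_cpair a b : diag (cpair a b) = a + b.
Proof. apply diag_unique. rewrite cpair_triangle. simpl. lia. Qed.

Lemma unpair2_cpair a b : unpair2 (cpair a b) = b.
Proof. unfold unpair2. rewrite diag_cpair, cpair_triangle. lia. Qed.

Lemma unpair1_cpair a b : unpair1 (cpair a b) = a.
Proof. unfold unpair1. rewrite unpair2_cpair, diag_cpair. lia. Qed.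

Lemma unpair2_le n : unpair2 n <= n.
Proof. unfold unpair2; lia. Qed.

Lemma le_cpair_l a b : a <= cpair a b.
Proof. rewrite cpair_triangle. pose proof (le_triangle (a + b)). lia. Qed.

Lemma lt_cpair_r a b : 0 < a -> b < cpair a b.
Proof. rewrite cpair_triangle. pose proof (le_triangle (a + b)). lia. Qed.

Lemma lt_cpair_cpair_l k a b : 0 < k -> a < cpair k (cpair a b).
Proof. intros. pose proof (le_cpair_l a b). pose proof (lt_cpair_r k (cpair a b) H). lia. Qed.

Lemma lt_cpair_cpair_r k a b : 0 < k -> b < cpair k (cpair a b).
Proof.
  intros. pose proof (lt_cpair_r k (cpair a b) H). rewrite (cpair_triangle a b) in *. lia.
Qed.

Definition computable_cpair : computable2 cpair.
Proof.
  refine (computable2_ext _ _ (computable2_expr (EApp2 computable_add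
    (EApp1 computable_triangle (EApp2 computable_add (EVar 0) (EVar 1))) (EVar 1))
    (fun a b => triangle (a + b) + b) (fun _ _ => eq_refl)) _).
  intros; now rewrite cpair_triangle.
Defined.

(** * Coded lists and course-of-values recursion *)

(* Lists of numbers are coded with [0] for the empty list, so codes of nonempty
   lists are positive and strictly larger than the codes of their tails. *)
Definition ncons (x l : nat) : nat := S (cpair x l).
Definition nhead (l : nat) : nat := unpair1 (Nat.pred l).
Definition ntail (l : nat) : nat := unpair2 (Nat.pred l).

Fixpoint code_list (l : list nat) : nat :=
  match l with [] => 0 | a :: l' => ncons a (code_list l') end.

Lemma nhead_ncons x l : nhead (ncons x l) = x.
Proof. apply unpair1_cpair. Qed.

Lemma ntail_ncons x l : ntail (ncons x l) = l.
Proof. apply unpair2_cpair. Qed.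

Lemma ntail_lt l : l <> 0 -> ntail l < l.
Proof. unfold ntail. pose proof (unpair2_le (Nat.pred l)). lia. Qed.

Lemma ifz_ncons x l a b : ifz (ncons x l) a b = b.
Proof. reflexivity. Qed.

Definition computable_ncons : computable2 ncons :=
  computable2_expr (EApp1 computable_succ (EApp2 computable_cpair (EVar 0) (EVar 1)))
    _ (fun _ _ => eq_refl).
Definition computable_nhead : computable1 nhead :=
  computable1_expr (EApp1 computable_unpair1 (EApp1 computable_pred (EVar 0))) _ (fun _ => eq_refl).
Definition computable_ntail : computable1 ntail :=
  computable1_expr (EApp1 computable_unpair2 (EApp1 computable_pred (EVar 0))) _ (fun _ => eq_refl).

Definition nth_code (k l : nat) : nat := nhead (prim_rec (fun l => l) (fun _ r _ => ntail r) k l).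

Lemma nth_code_ncons_0 x l : nth_code 0 (ncons x l) = x.
Proof. apply nhead_ncons. Qed.

Lemma nth_code_ncons_S k x l : nth_code (S k) (ncons x l) = nth_code k l.
Proof.
  unfold nth_code. f_equal. induction k; simpl in *; [apply ntail_ncons | now rewrite IHk].
Qed.

Lemma nth_code_list l k : nth_code k (code_list l) = nth k l 0.
Proof.
  revert k; induction l as [|a l IH]; intros k; cbn [code_list].
  - unfold nth_code. replace (prim_rec _ _ k 0) with 0; [now destruct k|].
    induction k; simpl; [reflexivity | now rewrite <- IHk].
  - destruct k; [apply nth_code_ncons_0 | rewrite nth_code_ncons_S; apply IH].
Qed.

Definition computable_nth_code : computable2 nth_code :=
  computable2_expr (EApp1 computable_nhead (EApp2 (computable_prim_rec (fun l => l)
    (fun _ r _ => ntail r) computable_id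
    (computable3_expr (EApp1 computable_ntail (EVar 1)) _ (fun _ _ _ => eq_refl)))
    (EVar 0) (EVar 1))) _ (fun _ _ => eq_refl).

Section CourseOfValues.
Variable H : nat -> nat -> nat -> nat.

(* [history n x] lists the values of [cov_rec] at [n-1, ..., 0]. *)
Fixpoint history (n x : nat) : nat :=
  match n with 0 => 0 | S m => ncons (H m (history m x) x) (history m x) end.

Definition cov_rec (n x : nat) : nat := H n (history n x) x.

Definition history_at (n T m : nat) : nat := nth_code (n - 1 - m) T.

Lemma history_at_history n x m : m < n -> history_at n (history n x) m = cov_rec m x.
Proof.
  induction n as [|n IH]; intros Hm; [lia|]. cbn [history]. unfold history_at.
  destruct (Nat.eq_dec m n) as [->|Hne].
  - replace (S n - 1 - n) with 0 by lia. apply nth_code_ncons_0.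
  - replace (S n - 1 - m) with (S (n - 1 - m)) by lia. rewrite nth_code_ncons_S. apply IH. lia.
Qed.

Definition computable_cov_rec (HH : computable3 H) : computable2 cov_rec.
Proof.
  pose (P := computable_prim_rec (fun _ => 0) (fun m r x => ncons (H m r x) r)
    (computable_const 0)
    (computable3_expr (EApp2 computable_ncons (EApp3 HH (EVar 0) (EVar 1) (EVar 2)) (EVar 1))
      _ (fun _ _ _ => eq_refl))).
  refine (computable2_expr (EApp3 HH (EVar 0) (EApp2 P (EVar 0) (EVar 1)) (EVar 1)) _ _).
  intros n x. unfold cov_rec. simpl. f_equal. induction n; simpl; congruence.
Defined.

End CourseOfValues.

Definition computable_history_at : computable3 history_at :=
  computable3_expr (EApp2 computable_nth_code
    (EApp2 computable_sub (EApp2 computable_sub (EVar 0) (EConst 1)) (EVar 2)) (EVar 1))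
    _ (fun _ _ _ => eq_refl).

Definition list_code_rec (z : nat -> nat) (h : nat -> nat -> nat -> nat) : nat -> nat -> nat :=
  cov_rec (fun n T x => ifz n (z x) (h n (history_at n T (ntail n)) x)).

Lemma list_code_rec_ncons z h a l x :
  list_code_rec z h (ncons a l) x = h (ncons a l) (list_code_rec z h l x) x.
Proof.
  unfold list_code_rec at 1, cov_rec at 1. rewrite ifz_ncons, history_at_history, ntail_ncons;
    [reflexivity|]. apply ntail_lt. discriminate.
Qed.

Definition computable_list_code_rec z h (Hz : computable1 z) (Hh : computable3 h) :
  computable2 (list_code_rec z h) :=
  computable_cov_rec _ (computable3_expr (EApp3 computable_ifz (EVar 0) (EApp1 Hz (EVar 2))
    (EApp3 Hh (EVar 0) (EApp3 computable_history_at (EVar 0) (EVar 1)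
      (EApp1 computable_ntail (EVar 0))) (EVar 2))) _ (fun _ _ _ => eq_refl)).

Definition list_code_iter (z : nat) (h : nat -> nat -> nat) (L : nat) : nat :=
  list_code_rec (fun _ => z) (fun n r _ => h n r) L 0.

Lemma list_code_iter_ncons z h a l :
  list_code_iter z h (ncons a l) = h (ncons a l) (list_code_iter z h l).
Proof. apply list_code_rec_ncons. Qed.

Definition computable_list_code_iter z h (Hh : computable2 h) : computable1 (list_code_iter z h) :=
  computable1_expr (EApp2 (computable_list_code_rec _ _ (computable_const z)
    (computable3_expr (EApp2 Hh (EVar 0) (EVar 1)) (fun n r _ => h n r) (fun _ _ _ => eq_refl)))
    (EVar 0) (EConst 0)) _ (fun _ => eq_refl).

Definition app_code : nat -> nat -> nat :=
  list_code_rec (fun m => m) (fun n r _ => ncons (nhead n) r).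

Lemma app_code_list l m : app_code (code_list l) (code_list m) = code_list (l ++ m).
Proof.
  induction l as [|a l IH]; [reflexivity|]. cbn [code_list app].
  unfold app_code. now rewrite list_code_rec_ncons, nhead_ncons, <- IH.
Qed.

Definition computable_app_code : computable2 app_code :=
  computable_list_code_rec _ _ computable_id (computable3_expr
    (EApp2 computable_ncons (EApp1 computable_nhead (EVar 0)) (EVar 1)) _ (fun _ _ _ => eq_refl)).

Definition map_code (f : nat -> nat -> nat) (x L : nat) : nat :=
  list_code_rec (fun _ => 0) (fun n r x => ncons (f x (nhead n)) r) L x.

Lemma map_code_list f x l : map_code f x (code_list l) = code_list (map (f x) l).
Proof.
  induction l as [|a l IH]; [reflexivity|]. cbn [code_list map].
  unfold map_code. now rewrite list_code_rec_ncons, nhead_ncons, <- IH.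
Qed.

Definition computable_map_code f (Hf : computable2 f) : computable2 (map_code f) :=
  computable2_expr (EApp2 (computable_list_code_rec _ _
    (computable_const 0) (computable3_expr
      (EApp2 computable_ncons (EApp2 Hf (EVar 2) (EApp1 computable_nhead (EVar 0))) (EVar 1))
      (fun n r x => ncons (f x (nhead n)) r) (fun _ _ _ => eq_refl))) (EVar 1) (EVar 0))
    _ (fun _ _ => eq_refl).

Definition concat_code : nat -> nat := list_code_iter 0 (fun n r => app_code (nhead n) r).

Lemma concat_code_list ls : concat_code (code_list (map code_list ls)) = code_list (concat ls).
Proof.
  induction ls as [|l ls IH]; [reflexivity|]. cbn [code_list map concat].
  unfold concat_code. now rewrite list_code_iter_ncons, nhead_ncons, <- app_code_list, <- IH.
Qed.

Definition computable_concat_code : computable1 concat_code :=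
  computable_list_code_iter _ _ (computable2_expr
    (EApp2 computable_app_code (EApp1 computable_nhead (EVar 0)) (EVar 1)) _ (fun _ _ => eq_refl)).

Definition pairs_code (f : nat -> nat -> nat) (L M : nat) : nat :=
  concat_code (map_code (fun M a => map_code f a M) M L).

Lemma pairs_code_list f l m :
  pairs_code f (code_list l) (code_list m) = code_list (flat_map (fun a => map (f a) m) l).
Proof.
  unfold pairs_code. rewrite map_code_list, flat_map_concat_map, <- concat_code_list, !map_map.
  do 2 f_equal. apply map_ext. intros a. apply map_code_list.
Qed.

Definition computable_pairs_code f (Hf : computable2 f) : computable2 (pairs_code f) :=
  computable2_expr (EApp1 computable_concat_code (EApp2 (computable_map_code _
    (computable2_expr (EApp2 (computable_map_code _ Hf) (EVar 1) (EVar 0))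
      (fun M a => map_code f a M) (fun _ _ => eq_refl))) (EVar 1) (EVar 0))) _ (fun _ _ => eq_refl).

Definition length_code : nat -> nat := list_code_iter 0 (fun _ r => S r).

Lemma length_code_list l : length_code (code_list l) = length l.
Proof.
  induction l as [|a l IH]; [reflexivity|]. cbn [code_list length].
  unfold length_code. now rewrite list_code_iter_ncons, <- IH.
Qed.

Definition computable_length_code : computable1 length_code :=
  computable_list_code_iter _ _
    (computable2_expr (EApp1 computable_succ (EVar 1)) _ (fun _ _ => eq_refl)).

(** * Normal forms on codes *)

Definition enc_clause (C : list term) : nat := code_list (map enc_term C).
Definition enc_cnf (L : list (list term)) : nat := code_list (map enc_clause L).

Lemma enc_list_code_list l : enc_list l = code_list (map enc_term l).
Proof. induction l; simpl; [reflexivity | now rewrite IHl]. Qed.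

Lemma enc_nelist_clause a r : S (enc_nelist (a, r)) = enc_clause (a :: r).
Proof. unfold enc_nelist, enc_clause. simpl. now rewrite enc_list_code_list. Qed.

Definition cnf_join_code : nat -> nat -> nat := pairs_code app_code.

Lemma cnf_join_code_enc L M : cnf_join_code (enc_cnf L) (enc_cnf M) = enc_cnf (cnf_join L M).
Proof.
  unfold cnf_join_code, enc_cnf. rewrite pairs_code_list. unfold cnf_join.
  rewrite !flat_map_concat_map, concat_map, !map_map. do 2 f_equal. apply map_ext. intros C.
  rewrite !map_map. apply map_ext. intros D. unfold enc_clause. now rewrite app_code_list, map_app.
Qed.

Definition computable_cnf_join_code : computable2 cnf_join_code :=
  computable_pairs_code _ computable_app_code.

Definition cnf_joins_code : nat -> nat :=
  list_code_iter (ncons 0 0) (fun n r => cnf_join_code (nhead n) r).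

Lemma cnf_joins_code_enc Ls :
  cnf_joins_code (code_list (map enc_cnf Ls)) = enc_cnf (cnf_joins Ls).
Proof.
  induction Ls as [|L Ls IH]; [reflexivity|]. cbn [map code_list cnf_joins fold_right].
  unfold cnf_joins_code. rewrite list_code_iter_ncons, nhead_ncons.
  fold cnf_joins_code. now rewrite IH, cnf_join_code_enc.
Qed.

Definition computable_cnf_joins_code : computable1 cnf_joins_code :=
  computable_list_code_iter _ _ (computable2_expr (EApp2 computable_cnf_join_code
    (EApp1 computable_nhead (EVar 0)) (EVar 1)) _ (fun _ _ => eq_refl)).

Definition tmul_code (a b : nat) : nat := cpair 3 (cpair a b).

Definition computable_tmul_code : computable2 tmul_code :=
  computable2_expr (EApp2 computable_cpair (EConst 3) (EApp2 computable_cpair (EVar 0) (EVar 1)))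
    _ (fun _ _ => eq_refl).

Definition cnf_prefix_code (a M : nat) : nat := map_code (map_code tmul_code) a M.

Lemma cnf_prefix_code_enc a M :
  cnf_prefix_code (enc_term a) (enc_cnf M) = enc_cnf (cnf_prefix a M).
Proof.
  unfold cnf_prefix_code, enc_cnf, cnf_prefix. rewrite map_code_list, !map_map. f_equal.
  apply map_ext. intros D. unfold enc_clause. now rewrite map_code_list, !map_map.
Qed.

Definition cnf_mul_code (L M : nat) : nat :=
  concat_code
    (map_code (fun M C => cnf_joins_code (map_code (fun M a => cnf_prefix_code a M) M C)) M L).

Lemma cnf_mul_code_enc L M : cnf_mul_code (enc_cnf L) (enc_cnf M) = enc_cnf (cnf_mul L M).
Proof.
  unfold cnf_mul_code, cnf_mul. change (enc_cnf L) with (code_list (map enc_clause L)).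
  rewrite map_code_list, map_map, flat_map_concat_map. unfold enc_cnf at 2.
  rewrite concat_map, <- concat_code_list, !map_map. do 2 f_equal. apply map_ext. intros C.
  unfold enc_clause at 1. rewrite map_code_list, map_map.
  erewrite map_ext by (intros a; apply cnf_prefix_code_enc).
  rewrite <- map_map with (g := enc_cnf), cnf_joins_code_enc. reflexivity.
Qed.

Definition computable_cnf_mul_code : computable2 cnf_mul_code.
Proof.
  pose (Hprefix := computable2_expr
    (EApp2 (computable_map_code _ (computable_map_code _ computable_tmul_code)) (EVar 1) (EVar 0))
    (fun M a => cnf_prefix_code a M) (fun _ _ => eq_refl)).
  pose (Hclause := computable2_expr (EApp1 computable_cnf_joins_code
    (EApp2 (computable_map_code _ Hprefix) (EVar 0) (EVar 1)))
    (fun M C => cnf_joins_code (map_code (fun M a => cnf_prefix_code a M) M C))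
    (fun _ _ => eq_refl)).
  exact (computable2_expr (EApp1 computable_concat_code
    (EApp2 (computable_map_code _ Hclause) (EVar 1) (EVar 0))) _ (fun _ _ => eq_refl)).
Defined.

Definition tstar_clause_code (_ a : nat) : nat := ncons (cpair 4 a) 0.

Definition cnf_star_code (L : nat) : nat :=
  cnf_joins_code (map_code (fun _ C => map_code tstar_clause_code 0 C) 0 L).

Lemma cnf_star_code_enc L : cnf_star_code (enc_cnf L) = enc_cnf (cnf_star L).
Proof.
  unfold cnf_star_code, cnf_star. rewrite <- cnf_joins_code_enc, !map_map.
  unfold enc_cnf at 1. rewrite map_code_list, map_map. do 2 f_equal. apply map_ext. intros C.
  unfold enc_clause. rewrite map_code_list. unfold enc_cnf. now rewrite !map_map.
Qed.

Definition computable_cnf_star_code : computable1 cnf_star_code.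
Proof.
  pose (Hsingle := computable2_expr (EApp2 computable_ncons
    (EApp2 computable_cpair (EConst 4) (EVar 1)) (EConst 0))
    tstar_clause_code (fun _ _ => eq_refl)).
  pose (Hclause := computable2_expr (EApp2 (computable_map_code _ Hsingle) (EConst 0) (EVar 1))
    (fun _ C => map_code tstar_clause_code 0 C) (fun _ _ => eq_refl)).
  exact (computable1_expr (EApp1 computable_cnf_joins_code
    (EApp2 (computable_map_code _ Hclause) (EConst 0) (EVar 0))) _ (fun _ => eq_refl)).
Defined.

(* [n] is read as the code of a term: its tag is [unpair1 n] and the codes of its
   immediate subterms are smaller than [n]. *)
Definition cnf_step (n T _ : nat) : nat :=
  let tag := unpair1 n in
  let sub1 := history_at n T (unpair1 (unpair2 n)) in
  let sub2 := history_at n T (unpair2 (unpair2 n)) in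
  ifz tag (ncons (ncons n 0) 0)
  (ifz (tag - 1) (app_code sub1 sub2)
  (ifz (tag - 2) (cnf_join_code sub1 sub2)
  (ifz (tag - 3) (cnf_mul_code sub1 sub2)
  (ifz (tag - 4) (cnf_star_code (history_at n T (unpair2 n)))
  (ncons (ncons n 0) 0))))).

Definition cnf_code (n : nat) : nat := cov_rec cnf_step n 0.

Definition computable_cnf_code : computable1 cnf_code.
Proof.
  pose (sub := fun e => EApp3 computable_history_at (EVar 0) (EVar 1) e).
  pose (sub1 := sub (EApp1 computable_unpair1 (EApp1 computable_unpair2 (EVar 0)))).
  pose (sub2 := sub (EApp1 computable_unpair2 (EApp1 computable_unpair2 (EVar 0)))).
  pose (tag := EApp1 computable_unpair1 (EVar 0)).
  pose (tag_is := fun k e1 e2 => EApp3 computable_ifz (EApp2 computable_sub tag (EConst k)) e1 e2).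
  pose (leaf := EApp2 computable_ncons (EApp2 computable_ncons (EVar 0) (EConst 0)) (EConst 0)).
  pose (step := computable3_expr (EApp3 computable_ifz tag leaf
    (tag_is 1 (EApp2 computable_app_code sub1 sub2)
    (tag_is 2 (EApp2 computable_cnf_join_code sub1 sub2)
    (tag_is 3 (EApp2 computable_cnf_mul_code sub1 sub2)
    (tag_is 4 (EApp1 computable_cnf_star_code (sub (EApp1 computable_unpair2 (EVar 0))))
    leaf))))) cnf_step (fun _ _ _ => eq_refl)).
  exact (computable1_expr (EApp2 (computable_cov_rec _ step) (EVar 0) (EConst 0))
    _ (fun _ => eq_refl)).
Defined.

Lemma cnf_code_enc u : cnf_code (enc_term u) = enc_cnf (cnf u).
Proof.
  induction u; unfold cnf_code in *; unfold cov_rec at 1; set (T := history _ _ _);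
    unfold cnf_step; cbn [enc_term].
  1, 6: rewrite unpair1_cpair; reflexivity.
  (* [unpair2] first: matching [cpair ?a ?b] against an unreduced [unpair2 _]
     makes [rewrite] unfold the arithmetic. *)
  all: rewrite !unpair2_cpair, !unpair1_cpair; cbn [ifz Nat.sub]; unfold T.
  4: rewrite (history_at_history cnf_step), IHu by (apply lt_cpair_r; lia);
       apply cnf_star_code_enc.
  all: rewrite !(history_at_history cnf_step), IHu1, IHu2
         by (apply lt_cpair_cpair_l || apply lt_cpair_cpair_r; lia).
  - unfold enc_cnf. rewrite app_code_list, <- map_app. reflexivity.
  - apply cnf_join_code_enc.
  - apply cnf_mul_code_enc.
Qed.

Definition bigjoin_code : nat -> nat :=
  list_code_iter 0 (fun n r => ifz (ntail n) (nhead n) (cpair 2 (cpair (nhead n) r))).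

Lemma bigjoin_code_enc a r : bigjoin_code (enc_clause (a :: r)) = enc_term (bigjoin a r).
Proof.
  revert a; induction r as [|b r IH]; intros a; unfold bigjoin_code, enc_clause;
    cbn [map code_list]; rewrite list_code_iter_ncons, nhead_ncons, ntail_ncons; [reflexivity|].
  cbn [bigjoin enc_term ifz]. rewrite <- IH. reflexivity.
Qed.

Definition computable_bigjoin_code : computable1 bigjoin_code :=
  computable_list_code_iter _ _ (computable2_expr (EApp3 computable_ifz
    (EApp1 computable_ntail (EVar 0)) (EApp1 computable_nhead (EVar 0))
    (EApp2 computable_cpair (EConst 2)
      (EApp2 computable_cpair (EApp1 computable_nhead (EVar 0)) (EVar 1)))) _ (fun _ _ => eq_refl)).

(** * The two reductions *)

Lemma reval_comp_computable1 c g (Hg : computable1 g) x y :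
  reval c [g x] y -> reval (RComp c [proj1_sig Hg]) [x] y.
Proof.
  intros Hc. eapply ev_comp; [|exact Hc].
  apply evs_cons; [apply (proj2_sig Hg) | apply evs_nil].
Qed.

Definition all_step (c : recf) : recf :=
  RComp (proj1_sig computable_mul)
    [RProj 1; RComp c [RComp (proj1_sig computable_nth_code) [RProj 0; RProj 2]]].

Definition all_loop (c : recf) : recf := RPrec (const_prog 1) (all_step c).

Definition all_prog (c : recf) : recf :=
  RComp (all_loop c) [proj1_sig computable_length_code; RProj 0].

Lemma reval_all_step c k y L b :
  reval c [nth_code k L] b -> reval (all_step c) [k; y; L] (y * b).
Proof.
  intros Hc. eapply ev_comp; [|apply (proj2_sig computable_mul)].
  apply evs_cons; [apply ev_proj|]. apply evs_cons; [|apply evs_nil].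
  eapply ev_comp; [|exact Hc]. apply evs_cons; [|apply evs_nil].
  eapply ev_comp; [|apply (proj2_sig computable_nth_code)].
  repeat (apply evs_cons; [apply ev_proj|]). apply evs_nil.
Qed.

Section AllProg.
Context {T : Type} (enc : T -> nat) (D P : T -> Prop) (c : recf).
Hypothesis Hc : forall x, D x -> (P x -> reval c [enc x] 1) /\ (~ P x -> reval c [enc x] 0).

Lemma reval_all_loop l1 l2 : Forall D (l1 ++ l2) ->
  (Forall P l1 -> reval (all_loop c) [length l1; code_list (map enc (l1 ++ l2))] 1) /\
  (~ Forall P l1 -> reval (all_loop c) [length l1; code_list (map enc (l1 ++ l2))] 0).
Proof.
  revert l2; induction l1 as [|x l1 IH] using rev_ind; intros l2 HD.
  - split; intros HP; [apply ev_prec0, reval_const_prog | now contradict HP].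
  - rewrite <- app_assoc in *. destruct (IH _ HD) as [IH1 IH0].
    set (L := code_list (map enc (l1 ++ [x] ++ l2))) in *.
    assert (Hnth : nth_code (length l1) L = enc x).
    { unfold L. rewrite nth_code_list, map_app, <- (length_map enc l1). apply nth_middle. }
    assert (Hx : D x) by (apply Forall_app in HD as [_ HD]; now inversion HD).
    assert (Hstep : forall y b, reval (all_loop c) [length l1; L] y -> reval c [enc x] b ->
                      reval (all_loop c) [length (l1 ++ [x]); L] (y * b)).
    { intros y b Hy Hb. rewrite length_app, Nat.add_1_r.
      eapply ev_precS; [exact Hy|]. apply reval_all_step. now rewrite Hnth. }
    rewrite Forall_app, Forall_cons_iff. split.
    + intros [Hl1 [Hxp _]]. apply (Hstep 1 1); [apply IH1 | apply Hc]; auto.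
    + intros HP. destruct (classic (Forall P l1)) as [Hl1|Hl1].
      * apply (Hstep 1 0); [apply IH1 | apply Hc]; auto using Forall_nil.
      * destruct (classic (P x)) as [Hxp|Hxp];
          [apply (Hstep 0 1) | apply (Hstep 0 0)]; auto; apply Hc; auto.
Qed.

Lemma reval_all_prog l : Forall D l ->
  (Forall P l -> reval (all_prog c) [code_list (map enc l)] 1) /\
  (~ Forall P l -> reval (all_prog c) [code_list (map enc l)] 0).
Proof.
  intros HD. rewrite <- (app_nil_r l) in HD. destruct (reval_all_loop l [] HD) as [H1 H0].
  rewrite app_nil_r in H1, H0.
  assert (Hlen : forall y, reval (all_loop c) [length l; code_list (map enc l)] y ->
                   reval (all_prog c) [code_list (map enc l)] y).
  { intros y Hy. eapply ev_comp; [|exact Hy]. apply evs_cons.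
    - rewrite <- (length_map enc), <- length_code_list. apply (proj2_sig computable_length_code).
    - apply evs_cons; [apply ev_proj | apply evs_nil]. }
  split; auto.
Qed.

End AllProg.

Lemma one_le_iff_meet_one_eq t : W_models_le TOne t <-> W_models_eq (TMeet TOne t) TOne.
Proof.
  split; intros H sigma Hs x; specialize (H sigma Hs x); simpl in *; now apply ole_iff_omeet_eq.
Qed.

Definition meet_one_code (n : nat) : nat :=
  cpair (cpair 1 (cpair (cpair 5 0) (bigjoin_code (S n)))) (cpair 5 0).

Lemma meet_one_code_enc l :
  meet_one_code (enc_nelist l) = enc_eqn (TMeet TOne (bigjoin (fst l) (snd l)), TOne).
Proof.
  destruct l as [a r]. unfold meet_one_code. now rewrite enc_nelist_clause, bigjoin_code_enc.
Qed.

Definition computable_meet_one_code : computable1 meet_one_code :=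
  computable1_expr (EApp2 computable_cpair (EApp2 computable_cpair (EConst 1)
    (EApp2 computable_cpair (EConst (cpair 5 0))
      (EApp1 computable_bigjoin_code (EApp1 computable_succ (EVar 0)))))
    (EConst (cpair 5 0))) _ (fun _ => eq_refl).

Definition eq_test_code (n : nat) : nat :=
  let star a := cpair 4 a in
  let mul a b := cpair 3 (cpair a b) in
  cpair 1 (cpair (star (mul (star (unpair2 n)) (unpair1 n)))
                 (star (mul (star (unpair1 n)) (unpair2 n)))).

Lemma eq_test_code_enc s t : eq_test_code (enc_eqn (s, t)) = enc_term (eq_test s t).
Proof. unfold eq_test_code, enc_eqn. cbn [fst snd]. now rewrite unpair1_cpair, unpair2_cpair. Qed.

Definition computable_eq_test_code : computable1 eq_test_code.
Proof.
  pose (star := fun e => EApp2 computable_cpair (EConst 4) e).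
  pose (mul := fun e1 e2 => EApp2 computable_cpair (EConst 3) (EApp2 computable_cpair e1 e2)).
  pose (s := EApp1 computable_unpair1 (EVar 0)). pose (t := EApp1 computable_unpair2 (EVar 0)).
  exact (computable1_expr (EApp2 computable_cpair (EConst 1)
    (EApp2 computable_cpair (star (mul (star t) s)) (star (mul (star s) t)))) _ (fun _ => eq_refl)).
Defined.

Definition clauses_code (n : nat) : nat := map_code (fun _ a => Nat.pred a) 0 (cnf_code n).

Lemma clauses_code_enc u :
  clauses_code (enc_term u) = code_list (map enc_nelist (map clause_split (cnf u))).
Proof.
  unfold clauses_code. rewrite cnf_code_enc. unfold enc_cnf.
  rewrite map_code_list, !map_map. f_equal. apply map_ext_in. intros C HC.
  destruct C as [|a r]; [now destruct (proj2 (wf_cnf_cnf _) _ HC)|].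
  now rewrite <- enc_nelist_clause.
Qed.

Definition computable_clauses_code : computable1 clauses_code :=
  computable1_expr (EApp2 (computable_map_code _ (computable2_expr (EApp1 computable_pred (EVar 1))
      (fun _ a => Nat.pred a) (fun _ _ => eq_refl)))
    (EConst 0) (EApp1 computable_cnf_code (EVar 0))) _ (fun _ => eq_refl).

Theorem proposition3p1 :
  comp_decidable enc_eqn (fun _ => True)
      (fun e : term * term => W_models_eq (fst e) (snd e))
  <->
  comp_decidable enc_nelist
      (fun l : term * list term => Forall is_basic (fst l :: snd l))
      (fun l => W_models_le TOne (bigjoin (fst l) (snd l))).
Proof.
  split; intros [c Hc].
  - exists (RComp c [proj1_sig computable_meet_one_code]). intros l _.
    rewrite one_le_iff_meet_one_eq.
    destruct (Hc (TMeet TOne (bigjoin (fst l) (snd l)), TOne) I) as [H1 H0].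
    split; intros HP; apply reval_comp_computable1; rewrite meet_one_code_enc; auto.
  - exists (RComp (all_prog c)
      [proj1_sig (computable1_comp computable_clauses_code computable_eq_test_code)]).
    intros [s t] _. cbn [fst snd]. rewrite W_models_eq_iff_eq_test, one_le_iff_one_le_clauses.
    destruct (reval_all_prog enc_nelist _ _ c Hc _ (cnf_clauses_basic (eq_test s t))) as [H1 H0].
    split; intros HP; apply reval_comp_computable1; rewrite eq_test_code_enc, clauses_code_enc; auto.
Qed.
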